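(* In a graph $G$ with $\mu_\alpha(G)\leq 1$, every internal vertex is adjacent to at most two leaves.
   Context: All graphs are finite and simple. For a graph $H$, $\alpha(H)$ is the maximum size of an independent set, $i(H)$ the minimum size of an inclusion-maximal independent set, and $\mu_\alpha(H)=\alpha(H)-i(H)$. Let $U$ be the set of vertices of $G$ whose connected component is a complete graph. In $G-U$, vertices of degree $1$ are called leaves and the others are called internal vertices. *)

(* A finite simple graph is a symmetric irreflexive relation
   e : rel T on a finType T. *)
From mathcomp Require Import all_boot.
Set Implicit Arguments. Unset Strict Implicit. Unset Printing Implicit Defensive.

Section Graphs.
Variables (T : finType) (e : rel T).

Definition independent (S : {set T}) : bool :=
  [forall x in S, forall y in S, ~~ e x y].

Definition maximal_independent (S : {set T}) : bool :=
  independent S && [forall x, (x \notin S) ==> ~~ independent (x |: S)].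

Definition alpha : nat := \max_(S : {set T} | independent S) #|S|.

(* i(G): minimum size of a maximal independent set (#|T| is a harmless
   default: maximal independent sets always exist and have size <= #|T|) *)
Definition imin : nat :=
  \big[minn/#|T|]_(S : {set T} | maximal_independent S) #|S|.

(* mu_alpha(G) = alpha(G) - i(G)  (always >= 0) *)
Definition mu_alpha : nat := alpha - imin.

Definition component (v : T) : {set T} := [set y | connect e v y].

Definition complete_component (v : T) : bool :=
  [forall x in component v, forall y in component v, (x != y) ==> e x y].

Definition Uset : {set T} := [set v | complete_component v].

Definition nbrGU (v : T) : {set T} := [set y | e v y & y \notin Uset].

Definition leaf (v : T) : bool := (v \notin Uset) && (#|nbrGU v| == 1).
Definition internal (v : T) : bool := (v \notin Uset) && (#|nbrGU v| != 1).

End Graphs.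

From HB Require Import structures.
From mathcomp Require Import all_boot zify.

Set Implicit Arguments.
Unset Strict Implicit.
Unset Printing Implicit Defensive.

(* Put a vertex v outside U into a maximal independent set M, so i(G) <= |M|.
   A leaf y adjacent to v has v as its only neighbour: any other neighbour
   lies outside U (U is a union of components) and would be a second
   neighbour of y in G - U.  Hence trading v for all the leaves adjacent to v
   keeps M independent, and alpha(G) >= |M| - 1 + #leaves, i.e.
   #leaves <= mu_alpha(G) + 1 <= 2. *)

(* Lets [bigD1] split the minimum that defines [imin]. *)
HB.instance Definition _ := SemiGroup.isComLaw.Build nat minn minnA minnC.

Section IndependentSets.
Variables (T : finType) (e : rel T).

Lemma independentP (S : {set T}) :
  reflect {in S &, forall x y, ~~ e x y} (independent e S).
Proof.
apply: (iffP forall_inP) => [indS x y xS yS | indS x xS].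
  by have /forall_inP := indS x xS; apply.
by apply/forall_inP => y yS; apply: indS.
Qed.

Lemma independent1 x : irreflexive e -> independent e [set x].
Proof. by move=> eirr; apply/independentP => y z /set1P -> /set1P ->; rewrite eirr. Qed.

Lemma card_le_alpha (S : {set T}) : independent e S -> #|S| <= alpha e.
Proof. exact: (@leq_bigmax_cond _ (independent e) (fun S : {set T} => #|S|)). Qed.

Lemma imin_le_card (S : {set T}) : maximal_independent e S -> imin e <= #|S|.
Proof. by move=> maxS; rewrite /imin (bigD1 S) //= geq_minl. Qed.

Lemma maximal_independent_superset (S : {set T}) :
  independent e S -> exists2 M, maximal_independent e M & S \subset M.
Proof.
move=> indS.
case: (@arg_maxnP _ S [pred M | independent e M && (S \subset M)] (fun M => #|M|)).
  by rewrite /= indS subxx.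
move=> M /andP [indM sSM] maxM; exists M => //.
apply/andP; split=> //; apply/forall_inP => x xM; apply/negP => indxM.
have := maxM (x |: M); rewrite /= indxM (subset_trans sSM (subsetUr _ _)).
by rewrite cardsU1 xM ltnn => /(_ isT).
Qed.

Lemma card_sub_le_mu_alpha (B M : {set T}) :
  independent e B -> maximal_independent e M -> #|B| - #|M| <= mu_alpha e.
Proof.
move=> /card_le_alpha leBa /imin_le_card leiM; rewrite /mu_alpha; lia.
Qed.

End IndependentSets.

Section Leaves.
Variables (T : finType) (e : rel T).
Hypothesis esym : symmetric e.

Local Notation leaf_nbrs v := [set y | e v y & leaf e y].

Lemma component_edge y z : e y z -> component e y = component e z.
Proof.
move=> eyz; apply/setP => u; rewrite !inE.
apply/idP/idP; apply: connect_trans; apply: connect1 => //.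
by rewrite esym.
Qed.

Lemma Uset_edge y z : e y z -> (y \in Uset e) = (z \in Uset e).
Proof. by move=> /component_edge eqC; rewrite !inE /complete_component eqC. Qed.

Lemma leaf_nbr_eq v y z :
  v \notin Uset e -> e v y -> leaf e y -> e y z -> z = v.
Proof.
move=> vU evy /andP [_ /cards1P [w nbr_y]] eyz.
have zU : z \notin Uset e by rewrite -(Uset_edge eyz) -(Uset_edge evy).
have vN : v \in nbrGU e y by rewrite inE esym evy vU.
have zN : z \in nbrGU e y by rewrite inE eyz zU.
by move: vN zN; rewrite nbr_y !inE => /eqP -> /eqP.
Qed.

Lemma card_swap_leaves (M : {set T}) v : v \in M -> independent e M ->
  #|(M :\ v) :|: leaf_nbrs v| = #|M| - 1 + #|leaf_nbrs v|.
Proof.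
move=> vM /independentP indM; rewrite cardsU (cardsD1 v M) vM.
suff -> : (M :\ v) :&: leaf_nbrs v = set0 by rewrite cards0 subn0 add1n subn1.
apply/setP => y; rewrite !inE; apply/negP => /andP [/andP [_ yM] /andP [evy _]].
by move: (indM v y vM yM); rewrite evy.
Qed.

Hypothesis eirr : irreflexive e.

Lemma independent_swap_leaves (M : {set T}) v :
  v \notin Uset e -> independent e M ->
  independent e ((M :\ v) :|: leaf_nbrs v).
Proof.
move=> vU /independentP indM; apply/independentP.
have leaf_nbr x y : e v x && leaf e x -> e x y -> y = v.
  by case/andP=> evx leafx; apply: leaf_nbr_eq.
move=> x y; rewrite !inE => /orP [/andP [xv xM] | xL] /orP [/andP [yv yM] | yL].
- exact: indM.
- by apply/negP; rewrite esym => /(leaf_nbr _ _ yL) /eqP; rewrite (negPf xv).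
- by apply/negP => /(leaf_nbr _ _ xL) /eqP; rewrite (negPf yv).
- by apply/negP => /(leaf_nbr _ _ xL) yv; move: yL; rewrite yv eirr.
Qed.

End Leaves.

Theorem corollary6 (T : finType) (e : rel T)
  (esym : symmetric e) (eirr : irreflexive e)
  (hmu : mu_alpha e <= 1) (v : T) (hv : internal e v) :
  #|[set y | e v y & leaf e y]| <= 2.
Proof.
have vU : v \notin Uset e by case/andP: hv.
have [M maxM svM] := maximal_independent_superset (independent1 v eirr).
have vM : v \in M by rewrite (subsetP svM) ?set11.
have indM : independent e M by case/andP: maxM.
have := card_sub_le_mu_alpha (independent_swap_leaves esym eirr vU indM) maxM.
rewrite card_swap_leaves //; have : 0 < #|M| by apply/card_gt0P; exists v.
lia.
Qed.
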